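(* Let $G$ be a graph on $n\ge1$ vertices. Then $D(G,k)$, as a function of the positive integer $k$, is given by a polynomial in $k$ (with rational coefficients) of degree $n$ and with constant term $0$. If $G$ has no non-trivial automorphisms, then $D(G,k)=k^n$; otherwise, the sum of the coefficients of this polynomial is $0$.
   Context: A $k$-labeling of $G$ is a map $\phi:V(G)\to\{1,\dots,k\}$; an automorphism $\pi$ preserves $\phi$ if $\phi(\pi(v))=\phi(v)$ for all $v$; $\phi$ is distinguishing if only the identity preserves it. Two distinguishing $k$-labelings $\phi,\phi'$ are equivalent if some automorphism $\pi$ satisfies $\phi'(\pi(v))=\phi(v)$ for all $v$; $D(G,k)$ is the number of equivalence classes of distinguishing $k$-labelings of $G$. *)

From HB Require Import structures.
From mathcomp Require Import all_boot all_order all_algebra all_fingroup.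
Set Implicit Arguments. Unset Strict Implicit. Unset Printing Implicit Defensive.

(* Graphs: a finite simple graph is a symmetric irreflexive relation adj on a
   finType T of vertices.  Labels {1,...,k} are represented by 'I_k = {0,...,k-1}. *)

Section DistLab.
Variables (T : finType) (adj : rel T).

Definition is_aut (s : {perm T}) : bool :=
  [forall x, forall y, adj (s x) (s y) == adj x y].

Definition preserves (k : nat) (s : {perm T}) (phi : {ffun T -> 'I_k}) : bool :=
  [forall v, phi (s v) == phi v].

Definition distinguishing (k : nat) (phi : {ffun T -> 'I_k}) : bool :=
  [forall s : {perm T}, (is_aut s && preserves s phi) ==> (s == 1%g)].

Definition lab_equiv (k : nat) (phi phi' : {ffun T -> 'I_k}) : bool :=
  [exists s : {perm T}, is_aut s && [forall v, phi' (s v) == phi v]].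

Definition lab_class (k : nat) (phi : {ffun T -> 'I_k}) : {set {ffun T -> 'I_k}} :=
  [set psi | distinguishing psi && lab_equiv phi psi].

Definition Dnum (k : nat) : nat :=
  #| [set lab_class phi | phi in [set phi : {ffun T -> 'I_k} | distinguishing phi]] |.

End DistLab.

From HB Require Import structures.
From mathcomp Require Import all_boot all_order all_algebra all_fingroup.
Import GRing.Theory Num.Theory.

Set Implicit Arguments. Unset Strict Implicit. Unset Printing Implicit Defensive.

(* The automorphism group Aut of the graph acts freely on the distinguishing
   k-labelings, and the equivalence classes of labelings are its orbits, so
   D(G,k) |Aut| is the number of distinguishing k-labelings.  A labeling is
   distinguishing iff no non-identity automorphism fixes it, and a labeling
   fixed by every element of a set J of permutations is the same as a labeling
   of the orbits of <J>.  Inclusion-exclusion over the sets J of non-identity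
   automorphisms therefore gives
     D(G,k) |Aut| = sum_J (-1)^|J| k^(c J),   c J = number of orbits of <J>,
   a polynomial in k.  Since c J = n only for J empty and c J >= 1 always, it
   has degree n and no constant term; at k = 1 no labeling is distinguishing
   when Aut is non-trivial, so the coefficients sum to D(G,1) = 0. *)

Section Components.
Variables (T : finType) (e : rel T).

Lemma card_roots_rel0 : e =2 (fun _ _ => false) -> #|roots e| = #|T|.
Proof.
move=> e0; apply: eq_card => x; rewrite !inE; apply/eqP.
by case/connectP: (connect_root e x) => [[|y p] /=]; rewrite ?e0.
Qed.

Hypothesis e_sym : connect_sym e.

Lemma card_roots_gt0 : 0 < #|T| -> 0 < #|roots e|.
Proof.
by case/card_gt0P=> x _; apply/card_gt0P; exists (fingraph.root e x); apply: roots_root.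
Qed.

Lemma card_roots_lt x y : e x y -> x != y -> #|roots e| < #|T|.
Proof.
move=> exy neq_xy; rewrite -(cardC (roots e)) -[X in X < _]addn0 ltn_add2l.
apply/card_gt0P; case rx: (roots e x); last by exists x; rewrite !inE rx.
exists y; rewrite !inE; apply: contra neq_xy => /eqP ry; rewrite -(eqP rx) -ry.
by rewrite (root_connect e_sym) connect1.
Qed.

Lemma card_ffun_edge_const (U : finType) :
  #|[set f : {ffun T -> U} | [forall x, forall y, e x y ==> (f x == f y)]]|
    = #|U| ^ #|roots e|.
Proof.
pose R := {x | roots e x}.
pose rt x : R := exist _ (fingraph.root e x) (roots_root e_sym x).
pose lift (g : {ffun R -> U}) : {ffun T -> U} := [ffun x => g (rt x)].
have rt_val (r : R) : rt (val r) = r by apply: val_inj; apply/eqP; case: r.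
have lift_inj : injective lift.
  move=> g1 g2 /ffunP eq_g; apply/ffunP=> r.
  by have := eq_g (val r); rewrite !ffunE rt_val.
suff -> : [set f : {ffun T -> U} | [forall x, forall y, e x y ==> (f x == f y)]]
          = lift @: setT.
  by rewrite card_imset // cardsT card_ffun card_sig.
apply/setP=> f; rewrite inE; apply/idP/imsetP => [f_inv | [g _ ->]].
- exists [ffun r : R => f (val r)]; first by rewrite inE.
  apply/ffunP=> x; rewrite !ffunE /=.
  have cl : closed e [pred z | f z == f x].
    apply: (intro_closed e_sym) => a b eab; rewrite !inE => /eqP <-.
    by rewrite eq_sym; apply: (implyP (forallP (forallP f_inv a) b)).
  by have := closed_connect cl (connect_root e x); rewrite !inE eqxx => /esym/eqP.
- apply/forallP => x; apply/forallP => y; apply/implyP => exy; rewrite !ffunE.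
  apply/eqP; congr (g _); apply: val_inj; apply/eqP.
  by rewrite /= (root_connect e_sym) connect1.
Qed.

End Components.

Section PermOrbits.
Variable T : finType.
Implicit Types (J : {set {perm T}}) (s : {perm T}).

Definition perm_rel J : rel T := [rel x y | [exists s in J, (s x == y) || (s y == x)]].

(* The components of [perm_rel J] are the orbits of the group generated by [J]. *)
Definition n_orbits J := #|roots (perm_rel J)|.

Lemma connect_sym_perm_rel J : connect_sym (perm_rel J).
Proof. by apply: sym_connect_sym => x y; apply: eq_existsb => s; rewrite orbC. Qed.

Lemma n_orbits_set0 : n_orbits set0 = #|T|.
Proof. by apply: card_roots_rel0 => x y; apply/existsP => -[s]; rewrite inE. Qed.

Lemma n_orbits_gt0 J : 0 < #|T| -> 0 < n_orbits J.
Proof. exact/card_roots_gt0/connect_sym_perm_rel. Qed.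

Lemma n_orbits_lt J s : s \in J -> s != 1%g -> n_orbits J < #|T|.
Proof.
move=> sJ s_neq1; have /existsP[x sx_neq_x] : [exists x, s x != x].
  apply: contraNT s_neq1 => /existsPn s_fix; apply/eqP/permP => x.
  by rewrite perm1; apply/eqP/negPn/s_fix.
apply: (card_roots_lt (connect_sym_perm_rel J) (x := x) (y := s x)).
  by apply/existsP; exists s; rewrite sJ eqxx.
by rewrite eq_sym.
Qed.

Lemma card_ffun_perm_invariant (U : finType) J :
  #|[set f : {ffun T -> U} | [forall s in J, [forall v, f (s v) == f v]]]|
    = #|U| ^ n_orbits J.
Proof.
rewrite -(card_ffun_edge_const (connect_sym_perm_rel J)).
apply: eq_card => f; rewrite !inE.
apply/forallP/forallP => [f_inv x | f_inv s].
- apply/forallP => y; apply/implyP => /existsP[s /andP[sJ /orP[]] /eqP <-].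
    by rewrite eq_sym; apply: (forallP (implyP (f_inv s) sJ)).
  exact: (forallP (implyP (f_inv s) sJ)).
- apply/implyP => sJ; apply/forallP => v.
  rewrite eq_sym; apply: (implyP (forallP (f_inv v) (s v))).
  by apply/existsP; exists s; rewrite sJ eqxx.
Qed.

End PermOrbits.

Section InclusionExclusion.
Variables (R : comRingType) (I X : finType).
Local Open Scope ring_scope.

Lemma indicator_forall_not (b : pred I) :
  [forall i, ~~ b i]%:R = \sum_(J : {set I}) (-1) ^+ #|J| * [forall i in J, b i]%:R :> R.
Proof.
transitivity (\prod_i (- (b i)%:R + 1) : R).
  case: forallP => [no_b | /forallP/forallPn[i]]; last first.
    by rewrite negbK => bi; rewrite (bigD1 i) //= bi addNr mul0r.
  by rewrite big1 // => i _; rewrite (negbTE (no_b i)) oppr0 add0r.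
rewrite bigA_distr; apply: eq_bigr => J _; rewrite -big_mkcond /= prodrN.
congr (_ * _); case: forallP => [all_b | /forallP/forallPn[i]].
  by rewrite big1 // => i iJ; rewrite (implyP (all_b i) iJ).
by rewrite negb_imply => /andP[iJ /negbTE bi]; rewrite (bigD1 i) //= bi mul0r.
Qed.

Lemma inclusion_exclusion (A : {set I}) (P : I -> pred X) :
  #|[set x | [forall i in A, ~~ P i x]]|%:R
    = \sum_(J : {set I} | J \subset A)
        (-1) ^+ #|J| * #|[set x | [forall i in J, P i x]]|%:R :> R.
Proof.
pose PA i x := (i \in A) && P i x.
have card_sum (Q : pred X) : #|[set x | Q x]|%:R = \sum_x (Q x)%:R :> R.
  rewrite -sum1_card natr_sum big_mkcond /=.
  by apply: eq_bigr => x _; rewrite inE; case: (Q x).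
have -> : [set x | [forall i in A, ~~ P i x]] = [set x | [forall i, ~~ PA i x]].
  by apply/setP => x; rewrite !inE; apply: eq_forallb => i; rewrite negb_and implybE.
rewrite card_sum (eq_bigr _ (fun x _ => indicator_forall_not (PA^~ x))) exchange_big /=.
rewrite [LHS](bigID (fun J : {set I} => J \subset A)) /= [X in _ + X]big1 ?addr0.
  apply: eq_bigr => J JA; rewrite -mulr_sumr -card_sum; congr (_ * _%:R).
  apply: eq_card => x; rewrite !inE; apply: eq_forallb_in => i iJ.
  by rewrite /PA (subsetP JA).
move=> J /subsetPn[i iJ iA]; rewrite big1 // => x _.
suff -> : [forall i in J, PA i x] = false by rewrite mulr0.
by apply/negbTE/forallPn; exists i; rewrite iJ /PA (negbTE iA).
Qed.

End InclusionExclusion.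

Section Relabel.
Variables (T U : finType).
Local Open Scope group_scope.

Definition relabel (phi : {ffun T -> U}) (s : {perm T}) : {ffun T -> U} :=
  [ffun v => phi (s^-1 v)].

Lemma relabel1 : relabel^~ 1 =1 id.
Proof. by move=> phi; apply/ffunP => v; rewrite ffunE invg1 perm1. Qed.

Lemma relabelM phi : act_morph relabel phi.
Proof. by move=> s t; apply/ffunP => v; rewrite !ffunE invMg permM. Qed.

Canonical relabel_action := TotalAction relabel1 relabelM.

Lemma relabel_fixP (phi : {ffun T -> U}) (s : {perm T}) :
  reflect (forall v, phi (s v) = phi v) (s \in 'C[phi | relabel_action]).
Proof.
apply: (iffP astab1P) => /= [/ffunP fix_phi v | fix_phi].
  by rewrite -[phi (s v)]fix_phi ffunE permK.
by apply/ffunP => v; rewrite ffunE -[in RHS](permKV s v) fix_phi.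
Qed.

End Relabel.

Section Automorphisms.
Variables (T : finType) (adj : rel T).
Local Open Scope group_scope.

Definition graph_aut := [set s : {perm T} | is_aut adj s].

Lemma graph_aut_group_set : group_set graph_aut.
Proof.
apply/group_setP; split=> [|s t]; rewrite !inE.
  by apply/forallP => x; apply/forallP => y; rewrite !perm1.
move=> /forallP aut_s /forallP aut_t; apply/forallP => x; apply/forallP => y.
by rewrite !permM (eqP (forallP (aut_t (s x)) (s y))) (forallP (aut_s x) y).
Qed.

Canonical graph_aut_group := group graph_aut_group_set.

End Automorphisms.

Section Distinguishing.
Variables (T : finType) (adj : rel T) (k : nat).
Local Open Scope group_scope.
Implicit Types (phi psi : {ffun T -> 'I_k}) (s : {perm T}).
Local Notation to := (relabel_action T _).
Local Notation Aut := (graph_aut adj).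
Local Notation D := [set phi : {ffun T -> 'I_k} | distinguishing adj phi].

Lemma preserves_astab1 phi s : preserves s phi = (s \in 'C[phi | to]).
Proof. by apply/forallP/relabel_fixP => fix_phi v; [apply/eqP | apply/eqP/fix_phi]. Qed.

Lemma distinguishing_astab1 phi :
  distinguishing adj phi = ('C_Aut[phi | to] \subset [1]).
Proof.
apply/forallP/subsetP => [dist_phi s | triv_stab s].
  by rewrite in_setI -preserves_astab1 inE in_set1; apply/implyP/dist_phi.
apply/implyP => /andP[aut_s]; rewrite preserves_astab1 => fix_s.
by rewrite -in_set1; apply: triv_stab; rewrite in_setI inE aut_s.
Qed.

Lemma lab_equiv_orbit phi psi : lab_equiv adj phi psi = (psi \in orbit to Aut phi).
Proof.
apply/existsP/imsetP => [[s /andP[aut_s /forallP psi_s]] | [s]].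
  exists s; first by rewrite inE.
  by apply/ffunP => v; rewrite ffunE -[in LHS](permKV s v) (eqP (psi_s _)).
rewrite inE => aut_s ->; exists s; rewrite aut_s; apply/forallP => v.
by rewrite ffunE permK.
Qed.

Lemma astab1_relabel phi s :
  s \in Aut -> 'C_Aut[to phi s | to] = 'C_Aut[phi | to] :^ s.
Proof.
by move=> aut_s; rewrite astab1_act [RHS]conjIg; congr (_ :&: _); apply/esym/conjGid.
Qed.

Lemma acts_Aut_distinguishing : [acts Aut, on D | to].
Proof.
apply/actsP => s aut_s phi; rewrite !inE !distinguishing_astab1 astab1_relabel //.
by rewrite sub_conjg conjs1g.
Qed.

Lemma card_orbit_distinguishing phi : phi \in D -> #|orbit to Aut phi| = #|Aut|.
Proof.
rewrite inE distinguishing_astab1 => /trivgP triv_stab.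
by rewrite -(card_orbit_stab to Aut phi) triv_stab cards1 muln1.
Qed.

Lemma lab_class_orbit phi : phi \in D -> lab_class adj phi = orbit to Aut phi.
Proof.
move=> D_phi; apply/setP => psi; rewrite inE lab_equiv_orbit andb_idl // => orb_psi.
by rewrite -[distinguishing _ _]inE (acts_in_orbit acts_Aut_distinguishing orb_psi).
Qed.

Lemma Dnum_mul_card_Aut : (Dnum adj k * #|Aut|)%N = #|D|.
Proof.
have -> : Dnum adj k = #|orbit to Aut @: D|.
  by rewrite /Dnum (eq_in_imset lab_class_orbit).
rewrite (card_partition (orbit_partition acts_Aut_distinguishing)) -sum_nat_const.
by apply/esym/eq_bigr => X /imsetP[phi D_phi ->]; apply: card_orbit_distinguishing.
Qed.

End Distinguishing.

Section DistinguishingPolynomial.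
Variables (T : finType) (adj : rel T).
Local Notation Aut := (graph_aut adj).
Local Notation D k := [set phi : {ffun T -> 'I_k} | distinguishing adj phi].
Local Open Scope ring_scope.

Lemma distinguishingE k (phi : {ffun T -> 'I_k}) :
  distinguishing adj phi = [forall s in (Aut^#)%g, ~~ preserves s phi].
Proof.
apply: eq_forallb => s; rewrite !inE.
by case: (s == 1%g); case: (is_aut adj s); case: (preserves s phi).
Qed.

Lemma card_distinguishing (R : comRingType) k :
  #|D k|%:R = \sum_(J : {set {perm T}} | J \subset (Aut^#)%g)
                (-1) ^+ #|J| * (k ^ n_orbits J)%N%:R :> R.
Proof.
rewrite (@eq_finset _ _ _ (@distinguishingE k)) inclusion_exclusion.
by apply: eq_bigr => J _; rewrite -[in (k ^ _)%N](card_ord k) -card_ffun_perm_invariant.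
Qed.

Definition Dpoly : {poly rat} :=
  #|Aut|%:R^-1 *: \sum_(J : {set {perm T}} | J \subset (Aut^#)%g)
                     (-1) ^+ #|J| *: 'X^(n_orbits J).

Lemma horner_Dpoly k : Dpoly.[k%:R] = (Dnum adj k)%:R.
Proof.
have Aut_neq0 : #|Aut|%:R != 0 :> rat by rewrite pnatr_eq0 -lt0n cardG_gt0.
rewrite -[RHS](mulfK Aut_neq0) -natrM Dnum_mul_card_Aut card_distinguishing.
rewrite hornerZ horner_sum mulrC; congr (_ * _); apply: eq_bigr => J _.
by rewrite hornerZ hornerXn natrX.
Qed.

Lemma coef_Dpoly i :
  Dpoly`_i = #|Aut|%:R^-1 *
    \sum_(J : {set {perm T}} | (J \subset (Aut^#)%g) && (n_orbits J == i)) (-1) ^+ #|J|.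
Proof.
rewrite coefZ coef_sum big_mkcondr /=; congr (_ * _); apply: eq_bigr => J _.
by rewrite coefZ coefXn mulr_natr mulrb eq_sym.
Qed.

Lemma n_orbits_eq_card (J : {set {perm T}}) :
  J \subset (Aut^#)%g -> (n_orbits J == #|T|) = (J == set0).
Proof.
move=> J_nontriv; apply/eqP/eqP => [n_J | ->]; last exact: n_orbits_set0.
case: (set_0Vmem J) => [// | [s sJ]]; move/subsetP/(_ s sJ): J_nontriv.
by rewrite !inE => /andP[s_neq1 _]; have := n_orbits_lt sJ s_neq1; rewrite n_J ltnn.
Qed.

Lemma size_Dpoly : size Dpoly = #|T|.+1.
Proof.
have lead : Dpoly`_#|T| = #|Aut|%:R^-1.
  rewrite coef_Dpoly (eq_bigl (pred1 set0)) ?big_pred1_eq ?cards0 ?mulr1 // => J /=.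
  have [J_nontriv | J_triv] := boolP (J \subset (Aut^#)%g); first exact: n_orbits_eq_card.
  by apply/esym/negbTE; apply: contraNneq J_triv => ->; apply: sub0set.
apply/anti_leq/andP; split.
  apply/leq_sizeP => i lt_n_i; rewrite coef_Dpoly big_pred0 ?mulr0 // => J.
  by rewrite (ltn_eqF (leq_ltn_trans (max_card (roots _)) lt_n_i)) andbF.
rewrite ltnNge; apply/negP => /leq_sizeP/(_ _ (leqnn _)); rewrite lead; apply/eqP.
by rewrite invr_eq0 pnatr_eq0 -lt0n cardG_gt0.
Qed.

Lemma coef0_Dpoly : (0 < #|T|)%N -> Dpoly`_0 = 0.
Proof.
move=> T_gt0; rewrite coef_Dpoly big_pred0 ?mulr0 // => J.
by rewrite (gtn_eqF (n_orbits_gt0 _ T_gt0)) andbF.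
Qed.

Lemma Dnum_asymmetric k : Aut = 1%g -> Dnum adj k = (k ^ #|T|)%N.
Proof.
move=> Aut1; have := Dnum_mul_card_Aut adj k; rewrite Aut1 cards1 muln1 => ->.
rewrite -[in RHS](card_ord k) -card_ffun; apply: eq_card => phi.
by rewrite inE distinguishing_astab1 Aut1 subsetIl.
Qed.

Lemma Dnum1_eq0 : Aut != 1%g -> Dnum adj 1 = 0%N.
Proof.
move=> Aut_ntriv; have := Dnum_mul_card_Aut adj 1.
have -> : D 1 = set0.
  apply/setP => phi; rewrite !inE distinguishing_astab1.
  have -> : ('C_Aut[phi | relabel_action T _] = Aut)%g.
    apply/setIidPl/subsetP => s _; rewrite -preserves_astab1.
    by apply/forallP => v; rewrite [phi _]ord1 [phi v]ord1.
  by apply/negbTE; apply: contra Aut_ntriv => /trivgP ->.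
by move/eqP; rewrite cards0 muln_eq0 orbC eqn0Ngt cardG_gt0 => /eqP.
Qed.

End DistinguishingPolynomial.

Local Open Scope ring_scope.

Theorem theorem13 (T : finType) (adj : rel T)
    (adj_sym : symmetric adj) (adj_irr : irreflexive adj)
    (n_ge1 : (0 < #|T|)%N) :
  exists p : {poly rat},
    [/\ size p = #|T|.+1,
        p`_0 = 0,
        (forall k : nat, (0 < k)%N -> p.[k%:R] = (Dnum adj k)%:R),
        ((forall s : {perm T}, is_aut adj s -> s = 1%g) ->
           forall k : nat, (0 < k)%N -> Dnum adj k = (k ^ #|T|)%N)
      & ((exists s : {perm T}, is_aut adj s /\ s <> 1%g) ->
           \sum_(i < size p) p`_i = 0)].
Proof.
have Aut1 (triv : forall s, is_aut adj s -> s = 1%g) : graph_aut adj = 1%g.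
  by apply/trivgP/subsetP => s; rewrite inE => /triv ->; apply: group1.
exists (Dpoly adj); split.
- exact: size_Dpoly.
- exact: coef0_Dpoly.
- by move=> k _; apply: horner_Dpoly.
- by move=> triv k _; apply/Dnum_asymmetric/Aut1.
- case=> s [aut_s s_neq1].
  have -> : \sum_(i < size (Dpoly adj)) (Dpoly adj)`_i = (Dpoly adj).[1%:R].
    by rewrite horner_coef; apply: eq_bigr => i _; rewrite expr1n mulr1.
  rewrite horner_Dpoly Dnum1_eq0 //; apply/trivgPn; exists s; rewrite ?inE //.
  exact/eqP.
Qed.
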